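(* Let $X$ be a $0$-dimensional, $\mathbb N$-compact space of non-measurable cardinality. Every continuous character $\chi:C_p(X,\mathbb Z)\to\mathbb T$ extends to a continuous character $\tilde\chi:C_p(X,\mathbb R)\to\mathbb T$, i.e. $\tilde\chi|_{C_p(X,\mathbb Z)}=\chi$.
   Context: Spaces are Tikhonov; $0$-dimensional means having a base of clopen sets; $\mathbb N$-compact means homeomorphic to a closed subspace of a product of copies of the discrete space $\mathbb N$. $C_p(X,\mathbb Z)$ (resp. $C_p(X,\mathbb R)$) is the group of continuous functions $X\to\mathbb Z$ with $\mathbb Z$ discrete (resp. $X\to\mathbb R$) with pointwise addition and the topology of pointwise convergence. $\mathbb T$ is the unit circle group, and a character is a continuous homomorphism into $\mathbb T$. *)

From HB Require Import structures.
From mathcomp Require Import all_boot all_order all_algebra.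
From mathcomp Require Import all_classical all_reals all_analysis.
Set Implicit Arguments. Unset Strict Implicit. Unset Printing Implicit Defensive.
Import Order.TTheory GRing.Theory Num.Theory.
Import numFieldNormedType.Exports.
Local Open Scope classical_set_scope.
Local Open Scope ring_scope.

Definition tikhonov (X : topologicalType) : Prop :=
  accessible_space X /\ completely_regular_space X.

Definition zero_dim_base (X : topologicalType) : Prop :=
  forall (U : set X) (x : X), open U -> U x ->
    exists V : set X, [/\ clopen V, V x & V `<=` U].

(** N-compact: homeomorphic to a closed subspace of a product of copies of
    the discrete space nat (nat carries the discrete topology in
    mathcomp-analysis; {ptws I -> nat} is the product topology). *)
Definition N_compact (X : topologicalType) : Prop :=
  exists (I : Type) (e : X -> {ptws I -> nat}),
    [/\ injective e, continuous e,
        (forall U : set X, open U ->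
           exists V : set {ptws I -> nat}, open V /\ e @` U = V `&` range e)
      & closed (range e)].

(** A (Ulam) measurable-cardinal witness on the set T: a two-valued
    countably additive measure on all subsets of T, with total mass 1,
    vanishing on singletons.  (mu A = true means "A has measure 1".)
    Countable additivity for a {0,1}-valued measure says: for pairwise
    disjoint A_n, the union has measure 1 iff some A_n has measure 1,
    and two disjoint sets cannot both have measure 1. *)
Definition ulam_measure (T : Type) (mu : set T -> bool) : Prop :=
  [/\ mu setT,
      (forall x : T, ~~ mu [set x]),
      (forall A B : set T, mu A -> mu B -> A `&` B !=set0)
    & (forall A : nat -> set T,
         (forall i j, i <> j -> A i `&` A j = set0) ->
         (mu (\bigcup_n A n) <-> exists n, mu (A n)))].

Definition nonmeasurable_card (T : Type) : Prop :=
  forall mu : set T -> bool, ~ ulam_measure mu.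

(** The circle group T, realized as the unit circle in R x R with complex
    multiplication. *)
Definition circle (R : realType) : set (R * R) :=
  [set z | z.1 ^+ 2 + z.2 ^+ 2 = 1].

Definition cmul (R : realType) (z w : R * R) : R * R :=
  (z.1 * w.1 - z.2 * w.2, z.1 * w.2 + z.2 * w.1).

Definition Zdisc := discrete_topology int.

(** The underlying sets of C_p(X,Z) and C_p(X,R), as subsets of the
    pointwise-convergence (product) spaces of all functions. *)
Definition CpZ (X : topologicalType) : set {ptws X -> Zdisc} :=
  [set f | continuous (f : X -> Zdisc)].

Definition CpR (X : topologicalType) (R : realType) : set {ptws X -> R} :=
  [set f | continuous (f : X -> R)].

Definition cont_char_Z (X : topologicalType) (R : realType)
    (chi : {ptws X -> Zdisc} -> R * R) : Prop :=
  [/\ (forall f, @CpZ X f -> @circle R (chi f)),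
      (forall f g, @CpZ X f -> @CpZ X g ->
         chi (fun x => (f x + g x)%R : int) = cmul (chi f) (chi g))
    & {within @CpZ X, continuous chi}].

Definition cont_char_R (X : topologicalType) (R : realType)
    (chi : {ptws X -> R} -> R * R) : Prop :=
  [/\ (forall f, @CpR X R f -> @circle R (chi f)),
      (forall f g, @CpR X R f -> @CpR X R g ->
         chi (fun x => f x + g x) = cmul (chi f) (chi g))
    & {within @CpR X R, continuous chi}].

(* In the pointwise topology a continuous character chi of C_p(X,Z) has
   positive real part on a basic neighbourhood {g | g = 0 on s} of 0, s finite.
   That neighbourhood is a subgroup closed under doubling, and doubling at
   least doubles 1 - Re chi while keeping it below 1, so chi is trivial there:
   chi only depends on the values on s.  Zero-dimensionality and T1 give
   clopen indicators e_x (x in s) restricting to Kronecker deltas on s, hence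
   chi f = prod_x chi(e_x)^(f x); writing chi(e_x) = exp(i th_x), the map
   g |-> exp(i sum_x th_x g(x)) is a continuous character of C_p(X,R)
   extending chi. *)

From HB Require Import structures.
From mathcomp Require Import all_boot all_order all_algebra.
From mathcomp Require Import all_classical all_reals all_analysis.
From mathcomp Require Import ring lra.
Set Implicit Arguments. Unset Strict Implicit. Unset Printing Implicit Defensive.
Import Order.TTheory GRing.Theory Num.Theory.
Import numFieldNormedType.Exports.
Local Open Scope classical_set_scope.
Local Open Scope ring_scope.

Section CircleGroup.
Variable R : realType.
Implicit Types z w : R * R.

Lemma circle_angle z : circle z -> exists t : R, z = (cos t, sin t).
Proof.
case: z => a b; rewrite /circle /= => h.
have a_itv : -1 <= a <= 1.
  by have := sqr_ge0 b; have := sqr_ge0 (a - 1); have := sqr_ge0 (a + 1);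
     move=> *; apply/andP; split; nra.
have cos_acos : cos (acos a) = a by apply: acosK; rewrite in_itv.
have sin_acos : sin (acos a) = `|b|.
  by rewrite sin_acos // -h addrAC subrr add0r sqrtr_sqr.
have [b_ge0|b_lt0] := lerP 0 b.
  by exists (acos a); rewrite cos_acos sin_acos ger0_norm.
by exists (- acos a); rewrite cosN sinN cos_acos sin_acos ltr0_norm ?opprK.
Qed.

Lemma circle_cmul_eq1 z w : circle z -> cmul z w = (1, 0) -> w = (z.1, - z.2).
Proof.
case: z w => a b [c d]; rewrite /circle /cmul /= => h [e1 e2].
have -> : c = a.
  transitivity (a * (a * c - b * d) + b * (a * d + b * c)).
    by rewrite -[LHS]mulr1 -h; ring.
  by rewrite e1 e2; ring.
have -> : d = - b.
  transitivity (a * (a * d + b * c) - b * (a * c - b * d)).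
    by rewrite -[LHS]mulr1 -h; ring.
  by rewrite e1 e2; ring.
by [].
Qed.

Lemma circle_cmul_idem z : circle z -> cmul z z = z -> z = (1, 0).
Proof.
case: z => a b; rewrite /circle /cmul /= => h [e1 e2].
have b0 : b = 0.
  have : b * (1 - 2 * a) = 0.
    by transitivity (b - (a * b + b * a)); [ring | rewrite e2 subrr].
  move/eqP; rewrite mulf_eq0 => /orP[/eqP //|/eqP ha].
  by have := sqr_ge0 b; nra.
by rewrite b0 in h e1 *; congr (_, _); nra.
Qed.

Lemma circle_sqr_gap z : circle z -> 0 < z.1 ->
  2 * (1 - z.1) <= 1 - (cmul z z).1.
Proof. by case: z => a b; rewrite /circle /cmul /= => h a_gt0; nra. Qed.

Lemma circle_doubling_trivial (T : Type) (P : T -> Prop) (c : T -> R * R)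
    (dbl : T -> T) :
  (forall f, P f -> P (dbl f)) -> (forall f, P f -> circle (c f)) ->
  (forall f, P f -> c (dbl f) = cmul (c f) (c f)) ->
  (forall f, P f -> 0 < (c f).1) -> forall f, P f -> c f = (1, 0).
Proof.
move=> P_dbl c_circle c_dbl c_pos.
have gap_pow k f : P f -> 2 ^+ k * (1 - (c f).1) < 1.
  elim: k f => [|k IHk] f Pf.
    by rewrite expr0 mul1r; have := c_pos f Pf; lra.
  have := IHk _ (P_dbl f Pf); rewrite c_dbl // exprS.
  have := circle_sqr_gap (c_circle f Pf) (c_pos f Pf).
  have : 0 <= 2 ^+ k :> R by rewrite exprn_ge0.
  by nra.
move=> f Pf; have := c_circle f Pf; have := c_pos f Pf.
have : 1 - (c f).1 <= 0.
  rewrite leNgt; apply/negP => d_gt0.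
  pose k := (Num.truncn (1 - (c f).1)^-1).+1.
  have k_gt : (1 - (c f).1)^-1 < k%:R by apply: truncnS_gt.
  have k_lt : k%:R < 2 ^+ k :> R by rewrite -natrX ltr_nat ltn_expl.
  have := gap_pow k f Pf.
  have : 1 < 2 ^+ k * (1 - (c f).1).
    by rewrite -ltr_pdivrMr // div1r; apply: lt_trans k_gt k_lt.
  lra.
case: (c f) => a b /=; rewrite /circle /= => a_ge1 a_gt0 h.
have a1 : a = 1 by nra.
by rewrite a1 in h *; congr (_, _); nra.
Qed.

End CircleGroup.

Section DiscreteValued.
Variable X : topologicalType.

Lemma continuous_discreteP (Y : discreteTopologicalType) (f : X -> Y) :
  continuous f <-> forall x, \forall y \near x, f y = f x.
Proof. by split=> f_cont x; apply/(discrete_cvg (f @ x) (f x)); apply: f_cont. Qed.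

Lemma continuous_discrete_op2 (Y Z : discreteTopologicalType) (op : Y -> Y -> Z)
    (f g : X -> Y) :
  continuous f -> continuous g -> continuous (fun x => op (f x) (g x)).
Proof.
move=> /continuous_discreteP f_loc /continuous_discreteP g_loc.
apply/continuous_discreteP => x.
by near=> y; rewrite (near (f_loc x) y) // (near (g_loc x) y).
Unshelve. all: by end_near.
Qed.

Lemma continuous_indicator (Y : discreteTopologicalType) (V : set X) (a b : Y) :
  clopen V ->
  continuous (fun x => if `[< V x >] then a else b).
Proof.
move=> [V_open V_closed]; apply/continuous_discreteP => x.
have [Vx|nVx] := pselect (V x).
  by apply: filterS (open_nbhs_nbhs (conj V_open Vx)) => y Vy; rewrite !asboolT.
have nV_open : open (~` V) by exact: closed_openC.
by apply: filterS (open_nbhs_nbhs (conj nV_open nVx)) => y nVy; rewrite !asboolF.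
Qed.

End DiscreteValued.

Lemma ptws_nbhs_agree (X : topologicalType) (Y : discreteUniformType)
    (f : {ptws X -> Y}) (A : set {ptws X -> Y}) :
  nbhs f A -> exists s : seq X,
    forall g : {ptws X -> Y}, (forall x, x \in s -> g x = f x) -> A g.
Proof.
pose agree_on_finite := [set B : set {ptws X -> Y} | exists s : seq X,
  forall g : {ptws X -> Y}, (forall x, x \in s -> g x = f x) -> B g].
have agree_filter : Filter agree_on_finite.
  split; first by exists [::].
    move=> B C [s1 s1B] [s2 s2C]; exists (s1 ++ s2) => g g_eq.
    by split; [apply: s1B | apply: s2C] => x xs; apply: g_eq;
      rewrite mem_cat xs ?orbT.
  by move=> B C BC [s sB]; exists s => g /sB /BC.
suff : {ptws, agree_on_finite --> f} by move/(_ A).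
apply/pointwise_cvgP => x; apply/discrete_cvg.
by exists [:: x] => g g_eq; rewrite /= g_eq ?mem_seq1.
Qed.

Lemma clopen_separating_indicators (X : topologicalType) :
  accessible_space X -> zero_dim_base X -> forall s : seq X,
  exists2 e : X -> {ptws X -> Zdisc}, (forall x, CpZ (e x)) &
    forall x y, x \in s -> y \in s -> e x y = (y == x)%:R.
Proof.
move=> X_T1 X_zd s.
have clopen_sep x : exists V : set X, clopen V /\ V x /\
    forall y, y \in s -> y != x -> ~ V y.
  have s_open : open (~` [set` seq.filter (predC1 x) s]).
    apply: closed_openC; apply: (accessible_finite_set_closed.1 X_T1).
    exact: finite_seq.
  have [|V [V_clopen Vx V_sub]] := X_zd _ x s_open.
    by rewrite /= mem_filter /= eqxx.
  exists V; split=> //; split=> // y ys yx Vy.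
  by apply: (V_sub y Vy); rewrite /= mem_filter /= yx ys.
have [V V_sep] := choice clopen_sep.
exists (fun x y => if `[< V x y >] then 1 else 0).
  by move=> x; apply: continuous_indicator; case: (V_sep x).
move=> x y xs ys; have [_ [Vx V_out]] := V_sep x.
have [->|yx] := eqVneq y x; first by rewrite asboolT.
by rewrite asboolF //; apply: V_out.
Qed.

Lemma sum_mul_eqr (T : eqType) (V : pzSemiRingType) (r : seq T) (x : T)
    (F : T -> V) :
  uniq r -> x \in r -> \sum_(y <- r) F y * (y == x)%:R = F x.
Proof.
move=> r_uniq xr; rewrite (big_rem x xr) /= eqxx mulr1 big1_seq ?addr0 //.
move=> y /andP[_].
by rewrite mem_rem_uniq // inE => /andP[/negbTE -> _]; rewrite mulr0.
Qed.

Section LincombCharacter.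
Variables (X : topologicalType) (R : realType) (th : X -> R) (t : seq X).

Definition lincomb (g : X -> R) : R := \sum_(x <- t) th x * g x.

Definition lincomb_char (g : X -> R) : R * R := (cos (lincomb g), sin (lincomb g)).

Lemma continuous_lincomb : continuous (lincomb : {ptws X -> R} -> R).
Proof.
move=> g; apply: (@cvg_big R^o X +%R 0 xpredT _ _ (nbhs g) t
  (fun x (h : {ptws X -> R}) => th x * h x)) => [|x _].
  exact: add_continuous.
apply: cvgM; first exact: cvg_cst.
exact: (pointwise_cvgP _ _).1 (@cvg_id _ (nbhs g)) x.
Qed.

Lemma lincomb_charD (f g : X -> R) :
  lincomb_char (fun x => f x + g x) = cmul (lincomb_char f) (lincomb_char g).
Proof.
rewrite /lincomb_char /cmul /=.
have -> : lincomb (fun x => f x + g x) = lincomb f + lincomb g.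
  by rewrite /lincomb -big_split; apply: eq_bigr => x _; rewrite mulrDr.
by rewrite cosD sinD /= [X in _ = (_, X)]addrC.
Qed.

Lemma lincomb_char_cont_char :
  cont_char_R (lincomb_char : {ptws X -> R} -> R * R).
Proof.
split.
- by move=> f _; rewrite /circle /lincomb_char /= cos2Dsin2.
- by move=> f g _ _; exact: lincomb_charD.
apply: continuous_subspaceT => g.
have lim_cos : (fun h : {ptws X -> R} => cos (lincomb h)) @ g --> cos (lincomb g).
  exact: cvg_comp (@continuous_lincomb g) (@continuous_cos R _).
have lim_sin : (fun h : {ptws X -> R} => sin (lincomb h)) @ g --> sin (lincomb g).
  exact: cvg_comp (@continuous_lincomb g) (@continuous_sin R _).
exact: cvg_pair lim_cos lim_sin.
Qed.

Lemma lincomb_char_eq1 (g : X -> R) :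
  (forall x, x \in t -> g x = 0) -> lincomb_char g = (1, 0).
Proof.
move=> g0; rewrite /lincomb_char /lincomb big_seq big1 ?cos0 ?sin0 // => x xt.
by rewrite g0 ?mulr0.
Qed.

Lemma lincomb_kronecker (g : X -> R) (x : X) : uniq t -> x \in t ->
  {in t, forall y, g y = (y == x)%:R} -> lincomb g = th x.
Proof.
move=> t_uniq xt g_delta; rewrite -(sum_mul_eqr th t_uniq xt) /lincomb !big_seq.
by apply: eq_bigr => y yt; rewrite g_delta.
Qed.

End LincombCharacter.

Definition circle_hom_Z (X : topologicalType) (R : realType)
    (c : {ptws X -> Zdisc} -> R * R) : Prop :=
  (forall f, CpZ f -> circle (c f)) /\
  (forall f g, CpZ f -> CpZ g ->
     c (fun x => (f x + g x)%R : int) = cmul (c f) (c g)).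

Section CircleHomZ.
Variables (X : topologicalType) (R : realType).
Implicit Types (c : {ptws X -> Zdisc} -> R * R) (f g : {ptws X -> Zdisc}).

Lemma CpZD f g : CpZ f -> CpZ g -> CpZ (fun x => (f x + g x)%R : int).
Proof. exact: continuous_discrete_op2. Qed.

Lemma CpZN f : CpZ f -> CpZ (fun x => (- f x)%R : int).
Proof.
by move=> Cf; exact: (continuous_discrete_op2
  (op := fun a _ : Zdisc => (- (a : int))%R : Zdisc) Cf Cf).
Qed.

Lemma CpZ0 : CpZ (fun _ : X => 0%R : int).
Proof. exact: cst_continuous. Qed.

Lemma cont_char_Z_hom c : cont_char_Z c -> circle_hom_Z c.
Proof. by case. Qed.

Lemma circle_hom_Z0 c : circle_hom_Z c -> c (fun _ => 0%R) = (1, 0).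
Proof.
move=> [c_circle cD]; apply: circle_cmul_idem (c_circle _ CpZ0) _.
by rewrite -cD //; exact: CpZ0.
Qed.

Lemma circle_hom_ZN c f : circle_hom_Z c -> CpZ f ->
  c (fun x => (- f x)%R : int) = ((c f).1, - (c f).2).
Proof.
move=> hc Cf; apply: circle_cmul_eq1; first exact: hc.1.
rewrite -hc.2 //; last exact: CpZN.
by rewrite -(circle_hom_Z0 hc); congr (c _); apply: funext => x; rewrite subrr.
Qed.

Section Equalizer.
Variables c c' : {ptws X -> Zdisc} -> R * R.
Hypotheses (hc : circle_hom_Z c) (hc' : circle_hom_Z c').

Definition hom_agree g := CpZ g /\ c g = c' g.

Lemma hom_agree0 : hom_agree (fun _ => 0%R).
Proof. by split; [exact: CpZ0 | rewrite !circle_hom_Z0]. Qed.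

Lemma hom_agreeD f g : hom_agree f -> hom_agree g ->
  hom_agree (fun x => (f x + g x)%R : int).
Proof.
by move=> [Cf ef] [Cg eg]; split; [exact: CpZD | rewrite hc.2 // hc'.2 // ef eg].
Qed.

Lemma hom_agreeN f : hom_agree f -> hom_agree (fun x => (- f x)%R : int).
Proof. by move=> [Cf ef]; split; [exact: CpZN | rewrite !circle_hom_ZN ?ef]. Qed.

Lemma hom_agree_eq f g : f =1 g -> hom_agree f -> hom_agree g.
Proof. by move=> /funext ->. Qed.

Lemma hom_agreeMz f (n : int) : hom_agree f ->
  hom_agree (fun x => (n * f x)%R : int).
Proof.
move=> af; have agree_nat (k : nat) : hom_agree (fun x => (k%:Z * f x)%R : int).
  elim: k => [|k IHk]; first by apply: hom_agree_eq hom_agree0 => x; rewrite mul0r.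
  apply: hom_agree_eq (hom_agreeD af IHk) => x.
  by rewrite -addn1 PoszD mulrDl mul1r addrC.
case: n => k; first exact: agree_nat.
by apply: hom_agree_eq (hom_agreeN (agree_nat k.+1)) => x; rewrite NegzE mulNr.
Qed.

Lemma hom_agree_sum (I : eqType) (e : I -> {ptws X -> Zdisc}) (n : I -> int)
    (t : seq I) :
  (forall i, i \in t -> hom_agree (e i)) ->
  hom_agree (fun x => (\sum_(i <- t) n i * e i x)%R : int).
Proof.
elim: t => [|i t IHt] agree_e.
  by apply: hom_agree_eq hom_agree0 => x; rewrite big_nil.
have agree_i : hom_agree (e i) by apply/agree_e/mem_head.
have agree_t : hom_agree (fun x => (\sum_(j <- t) n j * e j x)%R : int).
  by apply: IHt => j jt; apply/agree_e; rewrite in_cons jt orbT.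
apply: hom_agree_eq (hom_agreeD (hom_agreeMz (n i) agree_i) agree_t) => x.
by rewrite big_cons.
Qed.

Lemma hom_agree_kronecker (s : seq X) (e : X -> {ptws X -> Zdisc}) :
  (forall x y, x \in s -> y \in s -> e x y = (y == x)%:R) ->
  (forall x, x \in s -> hom_agree (e x)) ->
  (forall g, CpZ g -> (forall x, x \in s -> g x = 0%R) -> hom_agree g) ->
  forall f, CpZ f -> c f = c' f.
Proof.
move=> e_delta agree_e agree_ker f Cf.
pose t := undup s; pose proj x := (\sum_(y <- t) f y * e y x)%R.
have agree_proj : hom_agree proj.
  by apply: hom_agree_sum => y; rewrite mem_undup; exact: agree_e.
have agree_rest : hom_agree (fun x => (f x - proj x)%R).
  apply: agree_ker => [|x xs]; first exact: CpZD (CpZN agree_proj.1).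
  rewrite /proj (eq_big_seq (fun y => f y * (y == x)%:R)%R).
    by rewrite sum_mul_eqr ?undup_uniq ?mem_undup ?subrr.
  by move=> y; rewrite mem_undup => ys; rewrite e_delta // eq_sym.
apply: (hom_agree_eq _ (hom_agreeD agree_rest agree_proj)).2 => x.
by rewrite subrK.
Qed.

End Equalizer.
End CircleHomZ.

Lemma lincomb_char_intr_hom (X : topologicalType) (R : realType) (th : X -> R)
    (t : seq X) :
  circle_hom_Z
    (fun g : {ptws X -> Zdisc} => lincomb_char th t (fun x => (g x)%:~R)).
Proof.
split=> [f _|f g _ _]; first by rewrite /circle /= cos2Dsin2.
by rewrite -lincomb_charD; congr lincomb_char; apply: funext => x; rewrite intrD.
Qed.

Lemma cont_char_Z_finite_kernel (X : topologicalType) (R : realType)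
    (chi : {ptws X -> Zdisc} -> R * R) :
  cont_char_Z chi -> exists s : seq X, forall g, CpZ g ->
    (forall x, x \in s -> g x = 0) -> chi g = (1, 0).
Proof.
move=> chiC; have [chi_circle chiD chi_cont] := chiC.
pose zero : {ptws X -> Zdisc} := fun _ => 0.
have chi_near0 : chi g @[g --> within (@CpZ X) (nbhs zero)] --> chi zero.
  exact: (subspace_continuousP _ _).1 chi_cont zero (@CpZ0 X).
have chi0 : chi zero = (1, 0) by exact: circle_hom_Z0 (cont_char_Z_hom chiC).
have re_lim : (chi g).1 @[g --> within (@CpZ X) (nbhs zero)] --> (1 : R).
  by rewrite chi0 in chi_near0; exact: cvg_comp chi_near0 cvg_fst.
have [s s_pos] := ptws_nbhs_agree (cvgr_gt _ re_lim _ ltr01).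
exists s => g Cg g_s.
pose P g := CpZ g /\ forall x, x \in s -> g x = 0.
apply: (circle_doubling_trivial (P := P) (dbl := fun g x => (g x + g x)%R))
  (conj Cg g_s).
- by move=> f [Cf f_s]; split; [exact: CpZD | move=> x xs; rewrite f_s ?addr0].
- by move=> f [Cf _]; exact: chi_circle.
- by move=> f [Cf _]; exact: chiD.
- by move=> f [Cf f_s]; apply: s_pos.
Qed.

Theorem proposition6p2 (R : realType) (X : topologicalType) :
  tikhonov X -> zero_dim_base X -> N_compact X -> nonmeasurable_card X ->
  forall chi : {ptws X -> Zdisc} -> R * R,
    cont_char_Z chi ->
    exists chi' : {ptws X -> R} -> R * R,
      cont_char_R chi' /\
      (forall f : {ptws X -> Zdisc}, @CpZ X f ->
         chi' (fun x => ((f x : int)%:~R : R)) = chi f).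
Proof.
move=> [X_T1 _] X_zd _ _ chi chiC.
have chi_hom := cont_char_Z_hom chiC.
have [s chi_ker] := cont_char_Z_finite_kernel chiC.
have [e Ce e_delta] := clopen_separating_indicators X_T1 X_zd s.
have [th th_e] := choice (fun x => circle_angle (chi_hom.1 _ (Ce x))).
have lincomb_e x : x \in s -> lincomb th (undup s) (fun y => (e x y)%:~R) = th x.
  move=> xs; apply: lincomb_kronecker; rewrite ?undup_uniq ?mem_undup // => y.
  by rewrite mem_undup => ys; rewrite e_delta //; case: eqP.
exists (lincomb_char th (undup s)); split; first exact: lincomb_char_cont_char.
move=> f Cf; symmetry.
apply: (hom_agree_kronecker chi_hom (lincomb_char_intr_hom th (undup s)) e_delta)
  => //.
  by move=> x xs; split=> //; rewrite th_e /lincomb_char lincomb_e.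
move=> g Cg g_ker; split=> //; rewrite chi_ker // lincomb_char_eq1 // => x.
by rewrite mem_undup => /g_ker ->.
Qed.
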